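(* Let $X_1,\dots,X_n$ be independent random variables with values in $\mathbb{Z}_+$ and means $E(X_i)=p_i>0$, and let $S_n=\sum_{i=1}^nX_i$, $\lambda=\sum_{i=1}^np_i$. Then $$K(S_n)\le\sum_{i=1}^n\frac{p_i}{\lambda}K(X_i).$$
   Context: For a random variable $X$ with distribution $P$ on $\mathbb{Z}_+$ and mean $m>0$, the scaled score function is $\rho_X(x)=\frac{(x+1)P(x+1)}{mP(x)}-1$ and the scaled Fisher information is $K(X)=mE[\rho_X(X)^2]=m\sum_{x\ge0}\frac{\big(\frac{(x+1)P(x+1)}{m}-P(x)\big)^2}{P(x)}$, with conventions $0/0=0$, $c/0=\infty$ for $c>0$. *)

From HB Require Import structures.
From mathcomp Require Import all_boot all_order all_algebra.
From mathcomp Require Import all_classical all_reals all_analysis.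
Set Implicit Arguments. Unset Strict Implicit. Unset Printing Implicit Defensive.
Import Order.TTheory GRing.Theory Num.Theory.
Local Open Scope ring_scope.
Local Open Scope ereal_scope.

Section Defs.
Variable R : realType.

Definition is_pmf (P : nat -> R) : Prop :=
  (forall x, (0 <= P x)%R) /\ \sum_(0 <= x <oo) (P x)%:E = 1.

Definition mean_e (P : nat -> R) : \bar R :=
  \sum_(0 <= x <oo) ((x%:R * P x)%R)%:E.

(* Real-valued mean (used when it is finite). *)
Definition mean (P : nat -> R) : R := fine (mean_e P).

Definition fisher_term (P : nat -> R) (m : R) (x : nat) : \bar R :=
  let d := ((x.+1)%:R * P x.+1 / m - P x)%R in
  if P x == 0%R then (if d == 0%R then 0 else +oo)
  else ((d ^+ 2) / P x)%:E.

Definition K (P : nat -> R) : \bar R :=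
  (mean P)%:E * \sum_(0 <= x <oo) fisher_term P (mean P) x.

(* Law of the sum of two independent Z_+-valued variables: convolution. *)
Definition conv (P Q : nat -> R) : nat -> R :=
  fun z => (\sum_(i < z.+1) P i * Q (z - i)%N)%R.

Definition dirac0 : nat -> R := fun x => if x == 0%N then 1%R else 0%R.

(* Law of S_n = X_1 + ... + X_n for independent X_i with laws P i. *)
Definition conv_all (n : nat) (P : 'I_n -> nat -> R) : nat -> R :=
  \big[conv/dirac0]_(i < n) P i.

End Defs.

(* Write u(x) = (x+1) P(x+1) - m P(x) = m rho_X(x) P(x), so that m K(X) = sum_x u(x)^2 / P(x).
   For independent X, Y with laws P, Q and means p, q, the law S = P * Q of X + Y has
   u_S(z) = sum_i [u_X(i) Q(z-i) + P(i) u_Y(z-i)], hence by Cauchy-Schwarz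
   u_S(z)^2 / S(z) <= sum_i [u_X(i)^2/P(i) Q(z-i) + 2 u_X(i) u_Y(z-i) + P(i) u_Y(z-i)^2/Q(z-i)].
   Summing over z, the cross term vanishes because sum_x u_X(x) = p - p = 0, which gives
   (p + q) K(X + Y) <= p K(X) + q K(Y); the theorem follows by induction on n. *)

From Pilot Require Import Defs.
From HB Require Import structures.
From mathcomp Require Import all_boot all_order all_algebra.
From mathcomp Require Import all_classical all_reals all_analysis.
From mathcomp Require Import ring lra.
(* [conv] is the convolution of Defs, not MathComp-Analysis' convex combination *)
Import Defs.
Set Implicit Arguments. Unset Strict Implicit. Unset Printing Implicit Defensive.
Import Order.TTheory GRing.Theory Num.Theory.
Local Open Scope ring_scope.
Local Open Scope ereal_scope.

Section nonnegative_series.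
Variable R : realType.
Implicit Types (f g : nat -> R).

Lemma nneseries_distrl f (G : \bar R) : (forall i, (0 <= f i)%R) -> 0 <= G ->
  \sum_(0 <= i <oo) ((f i)%:E * G) = (\sum_(0 <= i <oo) (f i)%:E) * G.
Proof.
move=> f0; case: G => [r| |] // G0.
  rewrite muleC -nneseriesZl; last by move=> i _; rewrite lee_fin.
  by apply: eq_eseriesr => i _; rewrite muleC.
have [[k fk]|] := pselect (exists k, f k != 0%R); last first.
  move=> /forallNP f_eq0; have {}f_eq0 i : f i = 0%R by apply/eqP/negPn/negP/f_eq0.
  by rewrite !eseries0 ?mul0e // => i _ _; rewrite f_eq0 ?mul0e.
have fk0 : (0 < f k)%R by rewrite lt0r fk f0.
rewrite gt0_muley; last first.
  apply: (lt_le_trans _ (nneseries_lim_ge k.+1 _)); last by move=> i _ _; rewrite lee_fin.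
  by rewrite big_nat_recr //= sumEFin -EFinD lte_fin ltr_wpDl // sumr_ge0.
apply: (@nneseries_pinfty _ _ xpredT k) => //; last by rewrite gt0_muley ?lte_fin.
by move=> i _; apply: mule_ge0; rewrite ?lee_fin.
Qed.

Lemma conv_ge0 f g z : (forall i, (0 <= f i)%R) -> (forall j, (0 <= g j)%R) ->
  (0 <= conv f g z)%R.
Proof. by move=> f0 g0; apply: sumr_ge0 => i _; apply: mulr_ge0. Qed.

Lemma nneseries_conv f g : (forall i, (0 <= f i)%R) -> (forall j, (0 <= g j)%R) ->
  \sum_(0 <= z <oo) (conv f g z)%:E =
  (\sum_(0 <= i <oo) (f i)%:E) * \sum_(0 <= j <oo) (g j)%:E.
Proof.
move=> f0 g0.
pose h i z := if (i <= z)%N then (f i * g (z - i)%N)%:E else 0.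
have h0 i z : 0 <= h i z by rewrite /h; case: ifP => // _; rewrite lee_fin mulr_ge0.
have inner z : (conv f g z)%:E = \sum_(0 <= i <oo) h i z.
  rewrite (@nneseries_split _ (h^~ z) 0 z.+1) // eseries0 ?adde0; last first.
    by move=> i zi _; rewrite /h leqNgt zi.
  by rewrite /conv -sumEFin big_mkord; apply: eq_bigr => i _; rewrite /h -ltnS ltn_ord.
have outer i : \sum_(0 <= z <oo) h i z = (f i)%:E * \sum_(0 <= j <oo) (g j)%:E.
  rewrite (@nneseries_split _ (h i) 0 i) // big_nat big1 ?add0e; last first.
    by move=> z /andP[_ zi]; rewrite /h leqNgt zi.
  rewrite -nneseries_addn // -nneseriesZl; last by move=> j _; rewrite lee_fin.
  by apply: eq_eseriesr => j _; rewrite /h leq_addl addnK EFinM.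
rewrite (eq_eseriesr (fun z _ => inner z)) nneseries_interchange //.
rewrite (eq_eseriesr (fun i _ => outer i)) nneseries_distrl //.
by apply: nneseries_ge0 => j _ _; rewrite lee_fin.
Qed.

Lemma nneseries_conv_comb (a b : R) (f g h k : nat -> R) : (0 <= a)%R -> (0 <= b)%R ->
  (forall i, (0 <= f i)%R) -> (forall i, (0 <= g i)%R) ->
  (forall i, (0 <= h i)%R) -> (forall i, (0 <= k i)%R) ->
  \sum_(0 <= z <oo) (a * conv f g z + b * conv h k z)%:E =
  a%:E * ((\sum_(0 <= i <oo) (f i)%:E) * \sum_(0 <= i <oo) (g i)%:E) +
  b%:E * ((\sum_(0 <= i <oo) (h i)%:E) * \sum_(0 <= i <oo) (k i)%:E).
Proof.
move=> a0 b0 f0 g0 h0 k0; have fg0 z := conv_ge0 z f0 g0; have hk0 z := conv_ge0 z h0 k0.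
under eq_eseriesr do rewrite EFinD !EFinM.
rewrite nneseriesD; do ?by move=> z _ _; rewrite mule_ge0 ?lee_fin.
by rewrite !nneseriesZl ?nneseries_conv // => z _; rewrite lee_fin.
Qed.

Lemma nneseries_le_cancel (X Y c d : nat -> R) (r : R) :
  (forall z, (0 <= X z)%R) -> (forall z, (0 <= Y z)%R) ->
  (forall z, (0 <= c z)%R) -> (forall z, (0 <= d z)%R) ->
  (forall z, X z + c z <= Y z + d z)%R ->
  \sum_(0 <= z <oo) (c z)%:E = r%:E -> \sum_(0 <= z <oo) (d z)%:E = r%:E ->
  \sum_(0 <= z <oo) (X z)%:E <= \sum_(0 <= z <oo) (Y z)%:E.
Proof.
move=> X0 Y0 c0 d0 XY cr dr; rewrite -(@leeD2rE _ (r%:E)) //.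
rewrite -[X in _ + X <= _]cr -[X in _ <= _ + X]dr.
rewrite -!nneseriesD; do ?by move=> z _ _; rewrite lee_fin.
by apply: lee_nneseries => z _; rewrite -?EFinD ?lee_fin ?addr_ge0.
Qed.

End nonnegative_series.

Section size_bias.
Variable R : realType.
Implicit Types (P Q : nat -> R).

(* m times the law of X^* - 1, where X^* is the size-biased version of X ~ P *)
Definition sizebias P x := (x.+1%:R * P x.+1)%R.

Lemma nneseries_sizebias P : (forall x, (0 <= P x)%R) ->
  \sum_(0 <= x <oo) (sizebias P x)%:E = mean_e P.
Proof.
move=> P0; have xP0 x : 0 <= (x%:R * P x)%:E by rewrite lee_fin mulr_ge0.
rewrite /mean_e [RHS]nneseries_recl // mul0r add0e -nneseries_addn //.
by apply: eq_eseriesr => x _; rewrite addn1.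
Qed.

Lemma sizebias_conv P Q z :
  sizebias (conv P Q) z = (conv (sizebias P) Q z + conv P (sizebias Q) z)%R.
Proof.
rewrite /sizebias /conv mulr_sumr.
under eq_bigr => i _.
  rewrite -[in X in X%:R](subnKC (ltn_ord i : (i <= z.+1)%N)) natrD mulrDl.
  over.
rewrite big_split /=; congr (_ + _)%R.
  rewrite big_ord_recl /= !mul0r add0r.
  by apply: eq_bigr => i _; rewrite /bump leq0n add1n subSS mulrA.
rewrite big_ord_recr /= subnn mul0r addr0.
by apply: eq_bigr => i _; rewrite subSn 1?mulrCA // -ltnS.
Qed.

(* m rho_X(x) P(x), with rho_X the scaled score function *)
Definition score_mass P m x := (sizebias P x - m * P x)%R.

(* no term of K(X) is of the form c/0 = +oo with c > 0 *)
Definition score_regular P m := forall x, P x = 0%R -> score_mass P m x = 0%R.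

Lemma score_mass_conv P Q p q z :
  score_mass (conv P Q) (p + q) z =
  (conv (score_mass P p) Q z + conv P (score_mass Q q) z)%R.
Proof.
rewrite /score_mass sizebias_conv /conv mulr_sumr -!big_split -sumrB /=.
by apply: eq_bigr => i _; ring.
Qed.

Lemma conv_score_mass P Q p q z :
  conv (score_mass P p) (score_mass Q q) z =
  (conv (sizebias P) (sizebias Q) z - q * conv (sizebias P) Q z
   - p * conv P (sizebias Q) z + p * q * conv P Q z)%R.
Proof.
rewrite /conv !mulr_sumr -!sumrB -big_split /=.
by apply: eq_bigr => i _; rewrite /score_mass; ring.
Qed.

Lemma score_conv_term_eq0 P Q p q i j :
  score_regular P p -> score_regular Q q -> (P i * Q j = 0)%R ->
  (score_mass P p i * Q j + P i * score_mass Q q j = 0)%R.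
Proof.
move=> rP rQ /eqP; rewrite mulf_eq0 => /orP[/eqP Pi0 | /eqP Qj0].
  by rewrite rP // Pi0 !mul0r addr0.
by rewrite rQ // Qj0 !mulr0 addr0.
Qed.

Lemma score_regular_conv P Q p q :
  (forall x, (0 <= P x)%R) -> (forall x, (0 <= Q x)%R) ->
  score_regular P p -> score_regular Q q -> score_regular (conv P Q) (p + q).
Proof.
move=> P0 Q0 rP rQ z /psumr_eq0P PQ0.
rewrite score_mass_conv /conv -big_split big1 //= => i _.
by apply: score_conv_term_eq0 => //; apply: PQ0 => // j _; apply: mulr_ge0.
Qed.

End size_bias.

Section cauchy_schwarz.
Variable R : realFieldType.
Local Open Scope ring_scope.

Lemma sum_sqr_div_le (I : Type) (r : seq I) (c w : I -> R) :
  (forall i, 0 <= w i) -> (forall i, w i = 0 -> c i = 0) ->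
  (\sum_(i <- r) c i) ^+ 2 / \sum_(i <- r) w i <= \sum_(i <- r) c i ^+ 2 / w i.
Proof.
move=> w0 cw; set C := \sum_(i <- r) c i; set W := \sum_(i <- r) w i.
have [->|W_neq0] := eqVneq W 0.
  by rewrite invr0 mulr0 sumr_ge0 // => i _; rewrite divr_ge0 ?sqr_ge0.
set t := C / W.
(* tangent line of the convex map (c, w) |-> c^2 / w at the point (C, W) *)
have tangent i : 2 * t * c i - t ^+ 2 * w i <= c i ^+ 2 / w i.
  have [wi0|wi_neq0] := eqVneq (w i) 0; first by rewrite wi0 cw // !(mulr0, subr0, expr0n).
  have wi_gt0 : 0 < w i by rewrite lt0r wi_neq0 w0.
  rewrite -subr_ge0 (_ : _ - _ = (c i - t * w i) ^+ 2 / w i); last by field.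
  by rewrite divr_ge0 ?sqr_ge0 ?ltW.
apply: le_trans (ler_sum _ (fun i _ => tangent i)).
rewrite sumrB -!mulr_sumr -/C -/W le_eqVlt; apply/orP; left; apply/eqP.
by rewrite /t; field.
Qed.

Lemma sqr_div_mul_split (a b x y : R) : (x = 0 -> a = 0) -> (y = 0 -> b = 0) ->
  (a * y + x * b) ^+ 2 / (x * y) =
  a ^+ 2 / x * y + 2 * (a * b) + x * (b ^+ 2 / y).
Proof.
move=> xa yb; have [x0|x_neq0] := eqVneq x 0.
  by rewrite x0 xa // !(mul0r, mulr0, add0r, expr0n).
have [y0|y_neq0] := eqVneq y 0.
  by rewrite y0 yb // !(mul0r, mulr0, addr0, expr0n).
by field; rewrite x_neq0 y_neq0.
Qed.

End cauchy_schwarz.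

Section fisher_information.
Variable R : realType.
Implicit Types (P Q : nat -> R).

Definition fisher_density P m x := (score_mass P m x ^+ 2 / P x)%R.

Definition fisher_sum P m := \sum_(0 <= x <oo) (fisher_density P m x)%:E.

Lemma fisher_density_ge0 P m x : (forall x, (0 <= P x)%R) -> (0 <= fisher_density P m x)%R.
Proof. by move=> P0; rewrite divr_ge0 ?sqr_ge0. Qed.

Lemma fisher_term_ge0 P m x : (forall x, (0 <= P x)%R) -> 0 <= fisher_term P m x.
Proof.
move=> P0; rewrite /fisher_term; case: ifP => _; first by case: ifP.
by rewrite lee_fin divr_ge0 ?sqr_ge0.
Qed.

Lemma fisher_termE P m x : (0 < m)%R -> (P x = 0%R -> score_mass P m x = 0%R) ->
  fisher_term P m x = (m ^- 2)%:E * (fisher_density P m x)%:E.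
Proof.
move=> m_gt0 Pu; rewrite /fisher_term /fisher_density -EFinM.
have -> : (x.+1%:R * P x.+1 / m - P x = score_mass P m x / m)%R.
  by rewrite /score_mass /sizebias; field; rewrite gt_eqF.
have [Px0|Px_neq0] := eqVneq (P x) 0%R.
  by rewrite Pu // mul0r eqxx Px0 invr0 !mulr0.
by congr EFin; field; rewrite Px_neq0 gt_eqF.
Qed.

Lemma fisher_term_pinfty P m x :
  (0 < m)%R -> P x = 0%R -> score_mass P m x != 0%R -> fisher_term P m x = +oo.
Proof.
move=> m_gt0 Px0 u_neq0; rewrite /fisher_term Px0 eqxx subr0.
have -> : (x.+1%:R * P x.+1 / m = score_mass P m x / m)%R.
  by rewrite /score_mass Px0 mulr0 subr0.
by rewrite mulf_eq0 invr_eq0 (negbTE u_neq0) (gt_eqF m_gt0).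
Qed.

Lemma mean_ge0 P : (forall x, (0 <= P x)%R) -> (0 <= mean P)%R.
Proof. by move=> P0; apply/fine_ge0/nneseries_ge0 => x _ _; rewrite lee_fin mulr_ge0. Qed.

Lemma K_ge0 P : (forall x, (0 <= P x)%R) -> 0 <= K P.
Proof.
move=> P0; apply: mule_ge0; first by rewrite lee_fin mean_ge0.
by apply: nneseries_ge0 => x _ _; apply: fisher_term_ge0.
Qed.

Lemma mean_mulK P m : (forall x, (0 <= P x)%R) -> mean_e P = m%:E -> (0 < m)%R ->
  score_regular P m -> m%:E * K P = fisher_sum P m.
Proof.
move=> P0 Pm m_gt0 rP; rewrite /K /mean Pm /=.
rewrite (eq_eseriesr (fun x _ => fisher_termE m_gt0 (rP x))) nneseriesZl; last first.
  by move=> x _; rewrite lee_fin fisher_density_ge0.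
by rewrite !muleA -!EFinM -expr2 mulfV ?mul1e // expf_neq0 // gt_eqF.
Qed.

Lemma K_pinfty P m : (forall x, (0 <= P x)%R) -> mean_e P = m%:E -> (0 < m)%R ->
  ~ score_regular P m -> K P = +oo.
Proof.
move=> P0 Pm m_gt0 /existsNP[x /not_implyP[Px0 /eqP u_neq0]].
rewrite /K /mean Pm /= (@nneseries_pinfty _ _ xpredT x) ?gt0_muley ?lte_fin //.
  by move=> y _; apply: fisher_term_ge0.
exact: fisher_term_pinfty.
Qed.

End fisher_information.

Section convolution_laws.
Variable R : realType.
Implicit Types (P Q : nat -> R).

Lemma is_pmf_conv P Q : is_pmf P -> is_pmf Q -> is_pmf (conv P Q).
Proof.
move=> [P0 P1] [Q0 Q1]; split; first by move=> z; apply: conv_ge0.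
by rewrite nneseries_conv // P1 Q1 mule1.
Qed.

Lemma mean_e_conv P Q p q : is_pmf P -> is_pmf Q ->
  mean_e P = p%:E -> mean_e Q = q%:E -> mean_e (conv P Q) = (p + q)%:E.
Proof.
move=> [P0 P1] [Q0 Q1] Pp Qq.
rewrite -nneseries_sizebias; last by move=> z; apply: conv_ge0.
under eq_eseriesr do rewrite sizebias_conv EFinD.
rewrite nneseriesD; do ?by move=> z _ _; rewrite lee_fin conv_ge0 // => x; apply: mulr_ge0.
rewrite !nneseries_conv; do ?by move=> x; rewrite ?mulr_ge0.
by rewrite !nneseries_sizebias // Pp Qq P1 Q1 mule1 mul1e.
Qed.

Lemma is_pmf_dirac0 : is_pmf (@dirac0 R).
Proof.
split=> [x|]; first by rewrite /dirac0; case: ifP.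
rewrite nneseries_recl //; last by move=> x _; rewrite /dirac0; case: ifP.
by rewrite eseries0 ?adde0 // => -[|x] //.
Qed.

Lemma mean_e_dirac0 : mean_e (@dirac0 R) = 0%:E.
Proof. by rewrite /mean_e eseries0 // => -[|x] // _ _; rewrite ?mul0r // /dirac0 mulr0. Qed.

Lemma conv_dirac0 P : conv P (@dirac0 R) = P.
Proof.
apply/funext => z; rewrite /conv big_ord_recr /= subnn /dirac0 eqxx mulr1.
by rewrite big1 ?add0r // => i _; rewrite subn_eq0 leqNgt ltn_ord mulr0.
Qed.

Lemma conv_all_pmf_mean n (P : 'I_n -> nat -> R) (p : 'I_n -> R) :
  (forall i, is_pmf (P i)) -> (forall i, mean_e (P i) = (p i)%:E) ->
  is_pmf (conv_all P) /\ mean_e (conv_all P) = (\sum_(i < n) p i)%:E.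
Proof.
move=> hP hm; apply: (big_ind2 (fun X s => is_pmf X /\ mean_e X = s%:E)).
- by split; [exact: is_pmf_dirac0 | exact: mean_e_dirac0].
- by move=> X s Y t [XP Xs] [YP Yt]; split; [exact: is_pmf_conv | exact: mean_e_conv].
- by move=> i _; split.
Qed.

End convolution_laws.

Section fisher_information_of_sums.
Variable R : realType.
Implicit Types (P Q : nat -> R).

Lemma fisher_density_conv_le P Q p q z :
  (forall x, (0 <= P x)%R) -> (forall x, (0 <= Q x)%R) ->
  score_regular P p -> score_regular Q q ->
  (fisher_density (conv P Q) (p + q) z <=
   conv (fisher_density P p) Q z + conv P (fisher_density Q q) z
   + 2 * conv (score_mass P p) (score_mass Q q) z)%R.
Proof.
move=> P0 Q0 rP rQ.
rewrite /fisher_density score_mass_conv /conv -!big_split mulr_sumr -!big_split /=.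
pose w (i : 'I_z.+1) := (P i * Q (z - i)%N)%R.
pose c (i : 'I_z.+1) := (score_mass P p i * Q (z - i)%N + P i * score_mass Q q (z - i)%N)%R.
have CS : ((\sum_i c i) ^+ 2 / \sum_i w i <= \sum_i c i ^+ 2 / w i)%R.
  apply: sum_sqr_div_le => i; first exact: mulr_ge0.
  exact: score_conv_term_eq0.
apply: (le_trans CS); apply: ler_sum => i _.
by rewrite /c /w sqr_div_mul_split; [rewrite addrAC | exact: rP | exact: rQ].
Qed.

Lemma fisher_sum_conv_le P Q p q : is_pmf P -> is_pmf Q ->
  mean_e P = p%:E -> mean_e Q = q%:E -> (0 <= p)%R -> (0 <= q)%R ->
  score_regular P p -> score_regular Q q ->
  fisher_sum (conv P Q) (p + q) <= fisher_sum P p + fisher_sum Q q.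
Proof.
move=> [P0 P1] [Q0 Q1] Pp Qq p0 q0 rP rQ.
have sP0 x := mulr_ge0 (ler0n R x.+1) (P0 x.+1).
have sQ0 x := mulr_ge0 (ler0n R x.+1) (Q0 x.+1).
have fP0 x := fisher_density_ge0 p x P0; have fQ0 x := fisher_density_ge0 q x Q0.
have sumP := nneseries_sizebias P0; have sumQ := nneseries_sizebias Q0.
(* By [conv_score_mass], the cross term of [fisher_density_conv_le] is a signed
   combination of nonnegative convolutions; once the negative ones are moved to the
   left, the terms added on either side both sum to 4 p q. *)
pose c z := (2 * q * conv (sizebias P) Q z + 2 * p * conv P (sizebias Q) z)%R.
pose d z := (2 * conv (sizebias P) (sizebias Q) z + 2 * (p * q) * conv P Q z)%R.
have sum_c : \sum_(0 <= z <oo) (c z)%:E = (4 * (p * q))%:E.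
  rewrite nneseries_conv_comb ?mulr_ge0 // sumP sumQ Pp Qq P1 Q1 -!EFinM -EFinD.
  by congr EFin; ring.
have sum_d : \sum_(0 <= z <oo) (d z)%:E = (4 * (p * q))%:E.
  rewrite nneseries_conv_comb ?mulr_ge0 // sumP sumQ Pp Qq P1 Q1 -!EFinM -EFinD.
  by congr EFin; ring.
have -> : fisher_sum P p + fisher_sum Q q =
    \sum_(0 <= z <oo)
      (1 * conv (fisher_density P p) Q z + 1 * conv P (fisher_density Q q) z)%:E.
  by rewrite nneseries_conv_comb // P1 Q1 mule1 mul1e !mul1e.
apply: (nneseries_le_cancel _ _ _ _ _ sum_c sum_d) => z.
- exact: fisher_density_ge0 (fun x => conv_ge0 x P0 Q0).
- by rewrite !mul1r addr_ge0 // conv_ge0.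
- by rewrite addr_ge0 // mulr_ge0 ?mulr_ge0 ?conv_ge0.
- by rewrite addr_ge0 // mulr_ge0 ?mulr_ge0 ?conv_ge0.
- have := fisher_density_conv_le z P0 Q0 rP rQ.
  rewrite conv_score_mass /c /d; lra.
Qed.

Lemma mulK_conv_le P Q p q : is_pmf P -> is_pmf Q ->
  mean_e P = p%:E -> mean_e Q = q%:E -> (0 < p)%R -> (0 < q)%R ->
  (p + q)%:E * K (conv P Q) <= p%:E * K P + q%:E * K Q.
Proof.
move=> hP hQ Pp Qq p_gt0 q_gt0; have [P0 _] := hP; have [Q0 _] := hQ.
have KP0 : 0 <= p%:E * K P by rewrite mule_ge0 ?K_ge0 // lee_fin ltW.
have KQ0 : 0 <= q%:E * K Q by rewrite mule_ge0 ?K_ge0 // lee_fin ltW.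
have [rP|] := pselect (score_regular P p); last first.
  move/(K_pinfty P0 Pp p_gt0) => ->; rewrite gt0_muley ?lte_fin //.
  by rewrite addye ?leey // gt_eqF // (lt_le_trans ltNy0 KQ0).
have [rQ|] := pselect (score_regular Q q); last first.
  move/(K_pinfty Q0 Qq q_gt0) => ->; rewrite gt0_muley ?lte_fin //.
  by rewrite addey ?leey // gt_eqF // (lt_le_trans ltNy0 KP0).
have [S0 _] := is_pmf_conv hP hQ.
rewrite (mean_mulK S0 (mean_e_conv hP hQ Pp Qq)) ?addr_gt0 //; last first.
  exact: score_regular_conv.
rewrite (mean_mulK P0 Pp) ?(mean_mulK Q0 Qq) //.
by apply: fisher_sum_conv_le; rewrite ?ltW.
Qed.

Lemma sumr_ord_gt0 n (p : 'I_n.+1 -> R) : (forall i, 0 < p i)%R -> (0 < \sum_i p i)%R.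
Proof.
move=> p_gt0; rewrite big_ord_recl ltr_wpDr ?p_gt0 //.
by rewrite sumr_ge0 // => i _; rewrite ltW.
Qed.

Lemma mulK_conv_all_le n (P : 'I_n.+1 -> nat -> R) (p : 'I_n.+1 -> R) :
  (forall i, is_pmf (P i)) -> (forall i, mean_e (P i) = (p i)%:E) ->
  (forall i, (0 < p i)%R) ->
  (\sum_(i < n.+1) p i)%:E * K (conv_all P) <= \sum_(i < n.+1) (p i)%:E * K (P i).
Proof.
elim: n P p => [|n IH] P p hP hm p_gt0.
  by rewrite /conv_all !big_ord_recl !big_ord0 conv_dirac0 addr0 adde0.
pose P' (i : 'I_n.+1) := P (lift ord0 i); pose p' (i : 'I_n.+1) := p (lift ord0 i).
have [hS hmS] := conv_all_pmf_mean (P := P') (p := p') (fun i => hP _) (fun i => hm _).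
have p'_gt0 : (0 < \sum_i p' i)%R by apply: sumr_ord_gt0 => i; apply: p_gt0.
rewrite /conv_all [\big[_/_]_(i < n.+2) P i]big_ord_recl -/(conv_all P').
rewrite [(\sum_(i < n.+2) p i)%R]big_ord_recl [in leRHS]big_ord_recl.
apply: le_trans (mulK_conv_le (hP ord0) hS (hm ord0) hmS (p_gt0 ord0) p'_gt0) _.
by rewrite leeD2l //; apply: IH => i; [apply: hP | apply: hm | apply: p_gt0].
Qed.

End fisher_information_of_sums.

Theorem proposition3 (R : realType) (n : nat) (P : 'I_n -> nat -> R)
    (p : 'I_n -> R) :
  (0 < n)%N ->
  (forall i, is_pmf (P i)) ->
  (forall i, mean_e (P i) = (p i)%:E) ->
  (forall i, (0 < p i)%R) ->
  let lambda := (\sum_(i < n) p i)%R in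
  K (conv_all P) <= \sum_(i < n) ((p i / lambda)%:E * K (P i)).
Proof.
case: n P p => [|n] P p // _ hP hm p_gt0 /=.
set lambda := (\sum_(i < n.+1) p i)%R.
have lambda_gt0 : (0 < lambda)%R by apply: sumr_ord_gt0.
have KP0 i : 0 <= K (P i) by have [P0 _] := hP i; apply: K_ge0.
rewrite -(lee_pmul2l (x := lambda%:E)) ?lte_fin //.
apply: le_trans (mulK_conv_all_le hP hm p_gt0) _.
rewrite ge0_sume_distrr; last by move=> i _; rewrite mule_ge0 // lee_fin divr_ge0 ?ltW.
by apply: lee_sum => i _; rewrite [leRHS]muleA -EFinM mulrCA divff ?mulr1 ?gt_eqF.
Qed.
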